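(* Let $X$ be a Tychonoff space and let $x_0,y_0\in X$ be points that are not $P$-points of $X$. Then there exist a Tychonoff space $Y$ and an $\mathbb R$-quotient map $f\colon X\to Y$ such that $Y$ is a subset of $\mathbb R$ endowed with a topology finer than the one induced by the Euclidean metric, and $f(x_0)$ and $f(y_0)$ are not $P$-points of $Y$. Moreover, if $x_0\ne y_0$, then $f$ can be chosen so that $f(x_0)<f(y_0)$.
   Context: A point $x$ of a space is a $P$-point if every $G_\delta$-set containing $x$ is a neighborhood of $x$. A continuous surjection $p\colon X\to Y$ between topological spaces is $\mathbb R$-quotient if for every function $\varphi\colon Y\to\mathbb R$, $\varphi$ is continuous if and only if $\varphi\circ p$ is continuous; equivalently, the topology of $Y$ is the finest completely regular topology making $p$ continuous. *)

From HB Require Import structures.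
From mathcomp Require Import all_boot all_order all_algebra.
From mathcomp Require Import all_classical all_reals all_analysis.
From mathcomp Require Import borel_hierarchy urysohn.
Import numFieldNormedType.Exports.
Set Implicit Arguments. Unset Strict Implicit. Unset Printing Implicit Defensive.
Import Order.TTheory GRing.Theory Num.Theory.
Local Open Scope classical_set_scope.
Local Open Scope ring_scope.

Definition tychonoff_space (T : topologicalType) : Prop :=
  completely_regular_space T /\ hausdorff_space T.

Definition P_point (T : topologicalType) (x : T) : Prop :=
  forall G : set T, Gdelta G -> G x -> nbhs x G.

Definition R_quotient (R : realType) (X Y : topologicalType) (p : X -> Y) : Prop :=
  continuous p /\ (forall y : Y, exists x : X, p x = y) /\
  forall phi : Y -> R, continuous phi <-> continuous (phi \o p).

From HB Require Import structures.
From mathcomp Require Import all_boot all_order all_algebra.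
From mathcomp Require Import all_classical all_reals all_analysis.
From mathcomp Require Import borel_hierarchy urysohn.
From mathcomp Require Import lra.
Import numFieldNormedType.Exports.
Import Order.TTheory GRing.Theory Num.Theory.
Local Open Scope classical_set_scope.
Local Open Scope ring_scope.

(* A non-P-point x of a Tychonoff space X lies in the zero set of a continuous
   g : X -> [0, 1] that is not a neighbourhood of x: if the G_delta set
   \bigcap_k U k is not a neighbourhood of x, take g = sup_k f_k / (k + 1),
   where f_k separates x from the complement of U k.  Gluing the functions g, h
   obtained for x0, y0 along a function u separating x0 from y0 gives a
   continuous F : X -> R with F x0 = -1 and F y0 = 1, whose fibres over -1 and
   1 lie in the zero sets of g and h.  Give the image of F the finest
   completely regular topology making F continuous: it refines the Euclidean
   one, F becomes R-quotient, and as the fibres of F are preimages of the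
   G_delta sets {r} of R, the images of x0 and y0 are not P-points. *)

Lemma completely_regular_separator01 (R : realType) {X : topologicalType}
    {a : X} {B : set X} :
  completely_regular_space X -> closed B -> ~ B a ->
  exists f : X -> R, [/\ continuous f, forall z, 0 <= f z <= 1, f a = 0 &
    forall b, B b -> f b = 1].
Proof.
move=> crX clB Ba.
have /(@uniform_separatorP _ R) [f [fc f01 fa fB]] := crX a B clB Ba.
exists f; split => //.
- by move=> z; have := f01 (f z) (ex_intro2 _ _ z I erefl); rewrite /= in_itv.
- by apply: fa; exists a.
- by move=> b Bb; apply: fB; exists b.
Qed.

Lemma separating_function01 (R : realType) {X : topologicalType} (x y : X) :
  completely_regular_space X -> hausdorff_space X ->
  exists u : X -> R, [/\ continuous u, forall z, 0 <= u z <= 1, u x = 0 &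
    x <> y -> u y = 1].
Proof.
move=> crX hX; have [<-|xy] := pselect (x = y).
  exists (fun=> 0); split=> // [z|z]; [exact: cvg_cst | by rewrite lexx ler01].
have cly : closed [set y] by exact/accessible_closed_set1/hausdorff_accessible.
have [u [uc u01 ux uy]] := completely_regular_separator01 R crX cly xy.
by exists u; split=> // _; exact: uy.
Qed.

Section sup_of_vanishing_sequence.
Context {R : realType} {T : topologicalType} {t : nat -> T -> R}.
Hypothesis t_bound : forall k z, 0 <= t k z <= k.+1%:R^-1.

Let supt z := sup (range (t ^~ z)).

Let le_supt k z : t k z <= supt z.
Proof.
apply: ub_le_sup; last by exists k.
exists 1 => _ [j _ <-]; have /andP[_ tj] := t_bound j z.
by apply: le_trans tj _; rewrite invf_le1 ?ler1n ?ltr0Sn.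
Qed.

Let supt_le z c : (forall k, t k z <= c) -> supt z <= c.
Proof. by move=> tc; apply: ge_sup => [|_ [k _ <-]]; [exists (t 0%N z), 0%N|]. Qed.

Lemma sup_vanishing_ge0 z : 0 <= supt z.
Proof. by have /andP[t0 _] := t_bound 0 z; apply: le_trans t0 (le_supt 0 z). Qed.

Lemma sup_vanishing_le1 z : supt z <= 1.
Proof.
apply: supt_le => k; have /andP[_ tk] := t_bound k z.
by apply: le_trans tk _; rewrite invf_le1 ?ler1n ?ltr0Sn.
Qed.

Lemma sup_vanishing_eq0 z : supt z = 0 <-> forall k, t k z = 0.
Proof.
split=> [s0 k|t0].
  have /andP[tk0 _] := t_bound k z.
  by apply/eqP; rewrite eq_le tk0 andbT -s0 le_supt.
by apply/eqP; rewrite eq_le sup_vanishing_ge0 andbT supt_le // => k; rewrite t0.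
Qed.

(* Only the finitely many [t k] with [1/(k+1) >= e] matter up to [e]. *)
Lemma continuous_sup_vanishing :
  (forall k, continuous (t k)) -> continuous supt.
Proof.
move=> tc z; apply/cvgrPdist_le => e e0.
have [N _ /(_ N (leqnn _)) Ne] := near_infty_natSinv_lt (PosNum e0).
have close : \forall y \near z, forall k, (k < N)%N -> `|t k z - t k y| <= e.
  elim: N {Ne} => [|N IH]; first by apply: nearW => y k; rewrite ltn0.
  have /cvgrPdist_le /(_ e e0) := tc N z.
  apply: filterS2 IH => y tk tN k; rewrite ltnS leq_eqVlt => /orP[/eqP ->|]//.
  exact: tk.
have supt_near a b : (forall k, (k < N)%N -> `|t k a - t k b| <= e) ->
    supt b <= supt a + e.
  move=> ab; apply: supt_le => k; have [kN|Nk] := ltnP k N.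
    have := ab k kN; rewrite ler_distlC => /andP[_ tb].
    by apply: le_trans tb _; rewrite lerD2r le_supt.
  have /andP[_ tk] := t_bound k b; apply: le_trans tk _.
  apply: le_trans (_ : N.+1%:R^-1 <= _).
    by rewrite lef_pV2 ?posrE ?ltr0Sn // ler_nat ltnS.
  by apply: le_trans (ltW Ne) _; rewrite lerDr sup_vanishing_ge0.
apply: filterS close => y zy; rewrite ler_distlC.
have yz k : (k < N)%N -> `|t k y - t k z| <= e by rewrite distrC; exact: zy.
have := supt_near z y zy; have := supt_near y z yz.
by move=> h1 h2; apply/andP; split; lra.
Qed.

End sup_of_vanishing_sequence.

Lemma not_P_pointP (T : topologicalType) (x : T) :
  ~ P_point x <-> exists G : set T, [/\ Gdelta G, G x & ~ nbhs x G].
Proof.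
split=> [nP|[G [GG Gx nG]] P]; last exact/nG/P.
apply: contrapT => noG; apply: nP => G GG Gx; apply: contrapT => nG.
by apply: noG; exists G.
Qed.

Lemma Gdelta_preimage {T U : topologicalType} {f : T -> U} {G : set U} :
  continuous f -> Gdelta G -> Gdelta (f @^-1` G).
Proof.
move=> fc [V Vo ->]; exists (fun n => f @^-1` V n); last by rewrite preimage_bigcap.
by move=> n; exact: (continuousP f).1 fc _ (Vo n).
Qed.

Lemma Gdelta_set1 {R : realType} (r : R) : Gdelta [set r].
Proof.
exists (fun n => ball r n.+1%:R^-1); first by move=> n; exact: ball_open.
apply/seteqP; split=> [_ -> n _|s rs]; first exact: ballxx.
apply/eqP; apply: contrapT => /negP sr.
have d0 : 0 < `|r - s| by rewrite normr_gt0 subr_eq0 eq_sym.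
have [N _ /(_ N (leqnn _)) Nd] := near_infty_natSinv_lt (PosNum d0).
by have := rs N I; rewrite /ball /= => /lt_trans/(_ Nd); rewrite ltxx.
Qed.

Lemma not_P_point_zero_set (R : realType) {X : topologicalType} {x : X} :
  completely_regular_space X -> ~ P_point x ->
  exists g : X -> R, [/\ continuous g, forall z, 0 <= g z <= 1, g x = 0 &
    ~ nbhs x (g @^-1` [set 0])].
Proof.
move=> crX /not_P_pointP [G [[U Uo GU] Gx nG]].
have Ux n : U n x by move: Gx; rewrite GU; exact.
have /choice [f /all_and4 [fc f01 fx fU]] : forall n, exists f : X -> R,
    [/\ continuous f, forall z, 0 <= f z <= 1, f x = 0 & forall z, ~ U n z -> f z = 1].
  move=> n; apply: (completely_regular_separator01 R crX); first exact: open_closedC.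
  by move/(_ (Ux n)).
pose t k z := f k z / k.+1%:R.
have t_bound k z : 0 <= t k z <= k.+1%:R^-1.
  have /andP[f0 f1] := f01 k z.
  by rewrite divr_ge0 // ler_pdivrMr ?ltr0Sn // mulVf ?pnatr_eq0 // f1.
exists (fun z => sup (range (t ^~ z))); split.
- apply: continuous_sup_vanishing => // k z.
  by apply: cvgM; [exact: fc | exact: cvg_cst].
- by move=> z; rewrite sup_vanishing_ge0 ?sup_vanishing_le1.
- by apply/sup_vanishing_eq0 => // k; rewrite /t fx mul0r.
- move=> g0; apply: nG; apply: filterS g0 => z /(sup_vanishing_eq0 t_bound) t0.
  rewrite GU => n _; apply: contrapT => nUz.
  by have := t0 n; rewrite /t fU // mul1r => /eqP; rewrite invr_eq0 pnatr_eq0.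
Qed.

Lemma injective_continuous_hausdorff {T U : topologicalType} (i : T -> U) :
  hausdorff_space U -> injective i -> continuous i -> hausdorff_space T.
Proof.
move=> hU iinj ic p q cl; apply: iinj; apply: hU => A B nA nB.
by have [z [Az Bz]] := cl _ _ (ic p _ nA) (ic q _ nB); exists (i z).
Qed.

Section R_quotient_topology.
Context (R : realType) {X : topologicalType} {C : choiceType} (p : X -> C).

Definition R_quotient_index := {phi : C -> R | continuous (phi \o p)}.

(* The finest completely regular topology on [C] making [p] continuous. *)
Definition R_quotient_topology : uniformType :=
  @sup_topology C R_quotient_index
    (fun phi => Uniform.class (initial_topology (projT1 phi))).

Local Notation Q := R_quotient_topology.

Lemma R_quotient_map_continuous : continuous (p : X -> Q).
Proof.
move=> x; apply/cvg_sup => phi.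
exact: (@continuous_comp_initial C X R (projT1 phi) p (projT2 phi) x).
Qed.

Lemma R_quotient_continuousP (phi : Q -> R) :
  continuous phi <-> continuous (phi \o (p : X -> Q)).
Proof.
split=> [phic | pc q].
  move=> x; apply: continuous_comp; last exact: phic.
  exact: R_quotient_map_continuous.
have /cvg_sup/(_ (exist _ phi pc)) q_phi : (nbhs (q : Q)) --> (q : Q) by [].
exact: cvg_trans (cvg_app phi q_phi) (@initial_continuous C R phi q).
Qed.

Lemma R_quotientP : (forall c, exists x, p x = c) -> R_quotient R (p : X -> Q).
Proof.
move=> psurj; split; first exact: R_quotient_map_continuous.
by split=> // phi; exact: R_quotient_continuousP.
Qed.

End R_quotient_topology.

Lemma R_quotient_onto_real_image {R : realType} {X : topologicalType}
    {F : X -> R} :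
  continuous F ->
  exists (Y : topologicalType) (i : Y -> R) (f : X -> Y),
    [/\ tychonoff_space Y, R_quotient R f, injective i, continuous i & i \o f = F].
Proof.
move=> Fc; pose C := {r : R | r \in range F}.
pose p x : C := exist _ (F x) (mem_set (ex_intro2 _ _ x I erefl)).
have valc : continuous (val : R_quotient_topology R p -> R).
  exact: (R_quotient_continuousP R p val).2 Fc.
exists (R_quotient_topology R p), val, p; split=> //.
- split; first exact: uniform_completely_regular.
  by apply: injective_continuous_hausdorff _ (@Rhausdorff R) _ valc; exact: val_inj.
- apply: R_quotientP => -[r rF]; have [x _ Fxr] := set_mem rF.
  by exists x; exact: val_inj.
Qed.

Lemma not_P_point_image {R : realType} {X Y : topologicalType}
    {f : X -> Y} {i : Y -> R} {F : X -> R} {x : X} :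
  continuous f -> continuous i -> i \o f = F ->
  ~ nbhs x (F @^-1` [set F x]) -> ~ P_point (f x).
Proof.
move=> fc ic <- nfib Pfx; apply: nfib.
by have /fc := Pfx _ (Gdelta_preimage ic (Gdelta_set1 (i (f x)))) erefl.
Qed.

Section glue.
Context {R : realDomainType}.

Definition glue (a b c : R) := c * (1 - b) - (1 - c) * (1 - a).

Lemma glue_eqN1 (a b c : R) : 0 <= a <= 1 -> 0 <= b <= 1 -> 0 <= c <= 1 ->
  glue a b c = -1 -> a = 0.
Proof. by rewrite /glue => /andP[? ?] /andP[? ?] /andP[? ?] ?; nra. Qed.

Lemma glue_eq1 (a b c : R) : 0 <= a <= 1 -> 0 <= b <= 1 -> 0 <= c <= 1 ->
  glue a b c = 1 -> b = 0.
Proof. by rewrite /glue => /andP[? ?] /andP[? ?] /andP[? ?] ?; nra. Qed.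

End glue.

Theorem proposition2 (R : realType) (X : topologicalType) (x0 y0 : X) :
  tychonoff_space X -> ~ P_point x0 -> ~ P_point y0 ->
  exists (Y : topologicalType) (i : Y -> R) (f : X -> Y),
    [/\ tychonoff_space Y, R_quotient R f, injective i & continuous i] /\
    [/\ ~ P_point (f x0), ~ P_point (f y0)
       & x0 <> y0 -> i (f x0) < i (f y0)].
Proof.
move=> [crX hX] nPx nPy.
have [g [gc g01 gx0 ng]] := not_P_point_zero_set R crX nPx.
have [h [hc h01 hy0 nh]] := not_P_point_zero_set R crX nPy.
have [u [uc u01 ux0 uy0]] := separating_function01 R x0 y0 crX hX.
pose F z := glue (g z) (h z) (u z).
have Fc : continuous F.
  move=> z; apply: cvgB; apply: cvgM; try apply: cvgB;
    by [apply: uc | apply: hc | apply: gc | apply: cvg_cst].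
have Fx0 : F x0 = -1 by rewrite /F /glue ux0 gx0 mul0r sub0r !subr0 mul1r.
have Fy0 : x0 <> y0 -> F y0 = 1.
  by move=> /uy0 uy; rewrite /F /glue uy hy0 subrr mul0r !subr0 mul1r.
have [Y [i [f [Ytych fq iinj ic ifF]]]] := R_quotient_onto_real_image Fc.
have nPf z (k : X -> R) : F @^-1` [set F z] `<=` k @^-1` [set 0] ->
    ~ nbhs z (k @^-1` [set 0]) -> ~ P_point (f z).
  by move=> Fk nk; apply: not_P_point_image fq.1 ic ifF _ => /(filterS Fk).
have nPfx0 : ~ P_point (f x0).
  by apply: nPf ng => z; rewrite /= Fx0; exact: glue_eqN1.
exists Y, i, f; split=> //; split=> //.
- have [<- //|xy] := pselect (x0 = y0).
  by apply: nPf nh => z; rewrite /= Fy0 //; exact: glue_eq1.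
- move=> xy; have ifFz z : i (f z) = F z by rewrite -ifF.
  by rewrite !ifFz Fx0 Fy0 // ltrN10.
Qed.
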